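(* The price of anarchy (supremum over all weights $w_1,w_2\ge0$ with $w_1+w_2>0$ and all instances, with respect to pure Nash equilibria) for symmetric simultaneous two-player weighted network routing games with affine costs and uniform cost functions is equal to $2$.
   Context: A weighted two-player network routing game with affine costs consists of a directed graph whose arcs $r$ are resources with coefficients $\alpha_r,\beta_r\ge0$, two players $i=1,2$ with weights $w_i\ge0$, each with a source $s_i$ and a sink $t_i$; the actions $\mathcal{A}_i$ of player $i$ are the arc sets of directed $s_i$–$t_i$ paths. It is symmetric if both players have the same source and the same sink. For an action profile $A=(A_1,A_2)$ the load of arc $r$ is $x_r(A)=\sum_{j:\, r\in A_j} w_j$. With uniform costs, player $i$ pays $C_i(A)=\sum_{r\in A_i}(\alpha_r+\beta_r x_r(A))$. The social cost is $C(A)=C_1(A)+C_2(A)$. A pure Nash equilibrium is a profile from which no player can lower her cost by unilaterally changing her action. The price of anarchy of an instance is the maximum over Nash equilibria $A$ of $C(A)/\min_{A'} C(A')$; the price of anarchy of a class is the supremum over all instances (with positive optimal social cost). *)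

From HB Require Import structures.
From mathcomp Require Import all_boot all_order all_algebra.
From mathcomp Require Import reals.
Set Implicit Arguments. Unset Strict Implicit. Unset Printing Implicit Defensive.
Import Order.TTheory GRing.Theory Num.Theory.
Local Open Scope ring_scope.

Section Routing.
Variables (R : realType) (V E : finType) (tl hd : E -> V).

Fixpoint is_walk (s t : V) (p : seq E) : bool :=
  match p with
  | [::] => s == t
  | e :: p' => (tl e == s) && is_walk (hd e) t p'
  end.

Definition is_action (s t : V) (A : {set E}) : Prop :=
  exists p : seq E,
    [&& is_walk s t p & uniq (s :: map hd p)] /\ A = [set e in p].

Variables (alpha beta : E -> R) (w1 w2 : R).

Definition load (A1 A2 : {set E}) (r : E) : R :=
  (if r \in A1 then w1 else 0) + (if r \in A2 then w2 else 0).

(* uniform affine cost paid by a player using A under profile (A1, A2) *)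
Definition pcost (A A1 A2 : {set E}) : R :=
  \sum_(r in A) (alpha r + beta r * load A1 A2 r).

Definition cost1 (A1 A2 : {set E}) : R := pcost A1 A1 A2.
Definition cost2 (A1 A2 : {set E}) : R := pcost A2 A1 A2.
Definition social_cost (A1 A2 : {set E}) : R := cost1 A1 A2 + cost2 A1 A2.

(* symmetric game: both players have source s and sink t *)
Definition feasible (s t : V) (A1 A2 : {set E}) : Prop :=
  is_action s t A1 /\ is_action s t A2.

Definition is_pure_NE (s t : V) (A1 A2 : {set E}) : Prop :=
  feasible s t A1 A2 /\
  (forall B1, is_action s t B1 -> cost1 A1 A2 <= cost1 B1 A2) /\
  (forall B2, is_action s t B2 -> cost2 A1 A2 <= cost2 A1 B2).

(* the instance is admissible: nonnegative data, w1 + w2 > 0, and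
   positive optimal social cost (every feasible profile has positive cost;
   there are finitely many profiles, so this is min > 0) *)
Definition admissible (s t : V) : Prop :=
  (forall r, 0 <= alpha r) /\ (forall r, 0 <= beta r) /\
  0 <= w1 /\ 0 <= w2 /\ 0 < w1 + w2 /\
  (forall A1 A2, feasible s t A1 A2 -> 0 < social_cost A1 A2).

End Routing.

From HB Require Import structures.
From mathcomp Require Import all_boot all_order all_algebra.
From mathcomp Require Import reals.
From mathcomp Require Import lra.
Import Order.TTheory GRing.Theory Num.Theory.
Local Open Scope ring_scope.

(** Each player's equilibrium cost is at most her cost after deviating to B1
   or to B2, hence at most the cost of that path when every arc carries the
   full load w1 + w2.  An arc-by-arc check shows that the (w1, w2)-weighted
   average of these two full-load costs is at most the social cost of
   (B1, B2); so each player alone pays at most the optimum, and an equilibrium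
   costs at most twice the optimum.  The bound is attained on the Pigou
   network with weights 1 and 0: both players on the arc of cost x is an
   equilibrium of cost 2, since with uniform costs the weightless player still
   pays the load 1 of the other one, whereas sending the heavy player to the
   arc of constant cost 1 gives social cost 1. *)

Section UpperBound.
Variables (R : realType) (E : finType) (alpha beta : E -> R) (w1 w2 : R).
Hypotheses (alpha_ge0 : forall r, 0 <= alpha r) (beta_ge0 : forall r, 0 <= beta r).
Hypotheses (w1_ge0 : 0 <= w1) (w2_ge0 : 0 <= w2).

Definition full_load_cost (A : {set E}) : R :=
  pcost alpha beta w1 w2 A [set: E] [set: E].

Lemma load_le_full (A1 A2 : {set E}) (r : E) :
  load w1 w2 A1 A2 r <= load w1 w2 [set: E] [set: E] r.
Proof. by rewrite /load !inE; apply: lerD; case: ifP. Qed.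

Lemma pcost_le_full_load (A A1 A2 : {set E}) :
  pcost alpha beta w1 w2 A A1 A2 <= full_load_cost A.
Proof.
apply: ler_sum => r _; rewrite lerD2l.
by apply: ler_wpM2l; [exact: beta_ge0 | exact: load_le_full].
Qed.

Lemma full_load_cost_mean_le_social (B1 B2 : {set E}) :
  w1 * full_load_cost B1 + w2 * full_load_cost B2
    <= (w1 + w2) * social_cost alpha beta w1 w2 B1 B2.
Proof.
rewrite /full_load_cost /social_cost /cost1 /cost2 /pcost mulrDr !mulr_sumr.
rewrite (big_mkcond (mem B1)) (big_mkcond (mem B2)) -big_split /=.
rewrite [X in _ <= X + _]big_mkcond [X in _ <= _ + X]big_mkcond -big_split /=.
apply: ler_sum => r _; rewrite /load !inE.
have a0 := alpha_ge0 r; have b0 := beta_ge0 r.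
have bw11 := mulr_ge0 b0 (mulr_ge0 w1_ge0 w1_ge0).
have bw12 := mulr_ge0 b0 (mulr_ge0 w1_ge0 w2_ge0).
have bw22 := mulr_ge0 b0 (mulr_ge0 w2_ge0 w2_ge0).
have aw1 := mulr_ge0 a0 w1_ge0; have aw2 := mulr_ge0 a0 w2_ge0.
by case: (r \in B1); case: (r \in B2) => /=; nra.
Qed.

Lemma le_social_of_le_full_load (c : R) (B1 B2 : {set E}) :
  0 < w1 + w2 -> c <= full_load_cost B1 -> c <= full_load_cost B2 ->
  c <= social_cost alpha beta w1 w2 B1 B2.
Proof.
move=> w_gt0 c_le1 c_le2; rewrite -(ler_pM2l w_gt0).
apply: le_trans (full_load_cost_mean_le_social B1 B2).
by rewrite mulrDl; apply: lerD; apply: ler_wpM2l.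
Qed.

Variables (V : finType) (tl hd : E -> V) (s t : V).

Lemma NE_cost1_le_full_load (A1 A2 B : {set E}) :
  is_pure_NE tl hd alpha beta w1 w2 s t A1 A2 -> is_action tl hd s t B ->
  cost1 alpha beta w1 w2 A1 A2 <= full_load_cost B.
Proof.
move=> [_ [NE1 _]] actB.
exact: le_trans (NE1 B actB) (pcost_le_full_load _ _ _).
Qed.

Lemma NE_cost2_le_full_load (A1 A2 B : {set E}) :
  is_pure_NE tl hd alpha beta w1 w2 s t A1 A2 -> is_action tl hd s t B ->
  cost2 alpha beta w1 w2 A1 A2 <= full_load_cost B.
Proof.
move=> [_ [_ NE2]] actB.
exact: le_trans (NE2 B actB) (pcost_le_full_load _ _ _).
Qed.

Lemma NE_social_cost_le_twice (A1 A2 B1 B2 : {set E}) :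
  0 < w1 + w2 -> is_pure_NE tl hd alpha beta w1 w2 s t A1 A2 ->
  feasible tl hd s t B1 B2 ->
  social_cost alpha beta w1 w2 A1 A2 <= 2 * social_cost alpha beta w1 w2 B1 B2.
Proof.
move=> w_gt0 NE [actB1 actB2].
have cost1_le : cost1 alpha beta w1 w2 A1 A2 <= social_cost alpha beta w1 w2 B1 B2.
  by apply: le_social_of_le_full_load; [|exact: NE_cost1_le_full_load NE _..].
have cost2_le : cost2 alpha beta w1 w2 A1 A2 <= social_cost alpha beta w1 w2 B1 B2.
  by apply: le_social_of_le_full_load; [|exact: NE_cost2_le_full_load NE _..].
by rewrite mulr2n mulrDl mul1r; apply: lerD.
Qed.

End UpperBound.

Section PigouExample.
Variable R : realType.

Definition pigou_tail (e : bool) : bool := false.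
Definition pigou_head (e : bool) : bool := true.
Definition pigou_alpha (e : bool) : R := if e then 0 else 1.
Definition pigou_beta (e : bool) : R := if e then 1 else 0.

Local Notation is_pigou_action := (is_action pigou_tail pigou_head false true).
Local Notation pigou_pcost := (pcost pigou_alpha pigou_beta 1 0).

Lemma pigou_actionP (A : {set bool}) : is_pigou_action A <-> exists e, A = [set e].
Proof.
split=> [|[e ->]]; last by exists [:: e]; split; last by apply/setP=> x; rewrite !inE.
by move=> [[|e [|e' p]] [/andP[walk simple] ->]] //; exists e; apply/setP=> x; rewrite !inE.
Qed.

Lemma pigou_pcost1 (e : bool) (A1 A2 : {set bool}) :
  pigou_pcost [set e] A1 A2 = if e then (true \in A1)%:R else 1.
Proof.
rewrite /pcost big_set1 /load /pigou_alpha /pigou_beta.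
by case: e; case: (_ \in A1); case: (_ \in A2); rewrite /= ?(add0r, addr0, mul0r, mul1r).
Qed.

Lemma pigou_cost1 (e : bool) (A2 : {set bool}) :
  cost1 pigou_alpha pigou_beta 1 0 [set e] A2 = 1.
Proof. by rewrite /cost1 pigou_pcost1; case: e; rewrite ?inE. Qed.

Lemma pigou_admissible :
  admissible pigou_tail pigou_head pigou_alpha pigou_beta 1 0 false true.
Proof.
split; first by case; rewrite /pigou_alpha ?lexx ?ler01.
split; first by case; rewrite /pigou_beta ?lexx ?ler01.
split; first exact: ler01.
split; first exact: lexx.
split; first by rewrite addr0 ltr01.
move=> A1 A2 [/pigou_actionP[e1 ->] /pigou_actionP[e2 ->]].
rewrite /social_cost pigou_cost1 /cost2 pigou_pcost1 ltr_pwDl ?ltr01 //.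
by case: e2; rewrite ?ler0n ?ler01.
Qed.

Lemma pigou_NE :
  is_pure_NE pigou_tail pigou_head pigou_alpha pigou_beta 1 0 false true
    [set true] [set true].
Proof.
split; first by split; apply/pigou_actionP; exists true.
split=> B /pigou_actionP[e ->]; first by rewrite !pigou_cost1.
by rewrite /cost2 !pigou_pcost1; case: e; rewrite !inE.
Qed.

Lemma pigou_social_cost :
  social_cost pigou_alpha pigou_beta 1 0 [set true] [set true] = 2 /\
  social_cost pigou_alpha pigou_beta 1 0 [set false] [set true] = 1.
Proof. by rewrite /social_cost !pigou_cost1 /cost2 !pigou_pcost1 !inE /= addr0. Qed.

End PigouExample.

Theorem theorem4 (R : realType) :
  (* upper bound: every pure NE costs at most twice any feasible profile *)
  (forall (V E : finType) (tl hd : E -> V) (alpha beta : E -> R) (w1 w2 : R)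
          (s t : V),
      admissible tl hd alpha beta w1 w2 s t ->
      forall A1 A2 B1 B2,
        is_pure_NE tl hd alpha beta w1 w2 s t A1 A2 ->
        feasible tl hd s t B1 B2 ->
        social_cost alpha beta w1 w2 A1 A2
          <= 2 * social_cost alpha beta w1 w2 B1 B2) /\
  (* tightness: the supremum is 2 *)
  (forall eps : R, 0 < eps ->
     exists (V E : finType) (tl hd : E -> V) (alpha beta : E -> R) (w1 w2 : R)
            (s t : V),
       admissible tl hd alpha beta w1 w2 s t /\
       exists A1 A2 B1 B2,
         is_pure_NE tl hd alpha beta w1 w2 s t A1 A2 /\
         feasible tl hd s t B1 B2 /\
         (2 - eps) * social_cost alpha beta w1 w2 B1 B2
           < social_cost alpha beta w1 w2 A1 A2).
Proof.
split.
  move=> V E tl hd alpha beta w1 w2 s t [? [? [? [? [w_gt0 _]]]]] A1 A2 B1 B2.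
  exact: NE_social_cost_le_twice.
move=> eps eps_gt0.
exists bool, bool, pigou_tail, pigou_head, (pigou_alpha R), (pigou_beta R), 1, 0, false, true.
split; first exact: pigou_admissible.
exists [set true], [set true], [set false], [set true].
split; first exact: pigou_NE.
split; first by split; apply/pigou_actionP; [exists false | exists true].
have [-> ->] := pigou_social_cost R.
by rewrite mulr1 ltrBlDr ltrDl.
Qed.
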